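(* Let $\theta\in[\frac{\pi}{2},\frac{2\pi}{3}]$ and $z=e^{i\theta}$, and let $D=\{\tau\in\mathbb{H}:|\operatorname{Re}\tau|\le\frac12,\ \operatorname{Im}\tau>\frac25\}$. If $\tau\in D$ and $\tau=\gamma.z$ for some $\gamma\in\mathrm{PSL}_2(\mathbb{Z})$ (acting by Möbius transformations), then $\tau\in\{z,\,-1/z,\,\frac{-1}{z+1},\,\frac{z}{z+1},\,\frac{-1}{z-1},\,\frac{-z}{z-1}\}$.
   Context: $\mathbb{H}$ is the upper half plane; $\begin{pmatrix}a&b\\c&d\end{pmatrix}\in\mathrm{PSL}_2(\mathbb{Z})$ acts by $\tau\mapsto\frac{a\tau+b}{c\tau+d}$. *)

From Stdlib Require Import Reals ZArith.
From Coquelicot Require Import Coquelicot.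
Open Scope R_scope.

Definition in_H (t : C) : Prop := 0 < Im t.

Definition in_D (t : C) : Prop :=
  in_H t /\ Rabs (Re t) <= 1/2 /\ 2/5 < Im t.

(* Elements of PSL_2(Z) are represented by integer matrices (a b; c d) with
   a d - b c = 1 (i.e. elements of SL_2(Z)); +-gamma act identically. *)
Definition in_SL2Z (a b c d : Z) : Prop := (a * d - b * c = 1)%Z.

Definition mobius (a b c d : Z) (t : C) : C :=
  Cdiv (Cplus (Cmult (RtoC (IZR a)) t) (RtoC (IZR b)))
       (Cplus (Cmult (RtoC (IZR c)) t) (RtoC (IZR d))).

Definition expi (th : R) : C := (cos th, sin th).

(* Write z = x + iy with x in [-1/2, 0] and |z| = 1.  For (a b; c d) in
   SL_2(Z), Im (gamma z) = y / |cz + d|^2 and |cz + d|^2 = c^2 + 2cdx + d^2 is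
   at least c^2 + d^2 - |cd|, so Im (gamma z) > 2/5 forces |c|, |d| <= 1; up to
   the sign of gamma the bottom row is (0, 1), (1, 0) or (1, +-1), and gamma z
   is z + b, a - 1/z or a - 1/(z +- 1).  Since 1/z is the conjugate of z and
   1/(z +- 1) has real part +-1/2, the condition |Re (gamma z)| <= 1/2 leaves
   two values of the remaining integer in each case.  Two of them are only
   possible when x = -1/2, where z + 1 = -1/z and -1 - 1/z = z. *)

From Stdlib Require Import Reals ZArith Lra Lia.
From Coquelicot Require Import Coquelicot.
Open Scope R_scope.

Definition six_points (z tau : C) : Prop :=
  tau = z \/
  tau = Cdiv (RtoC (-1)) z \/
  tau = Cdiv (RtoC (-1)) (Cplus z (RtoC 1)) \/
  tau = Cdiv z (Cplus z (RtoC 1)) \/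
  tau = Cdiv (RtoC (-1)) (Cminus z (RtoC 1)) \/
  tau = Cdiv (Copp z) (Cminus z (RtoC 1)).

Lemma re_inv (w : C) : Re (/ w)%C = Re w / (Re w ^ 2 + Im w ^ 2).
Proof. destruct w as [u v]. reflexivity. Qed.

Lemma im_div (p q : C) :
  Im (p / q)%C = (Im p * Re q - Re p * Im q) / (Re q ^ 2 + Im q ^ 2).
Proof. destruct p as [p1 p2], q as [q1 q2]. simpl. unfold Rdiv. ring. Qed.

Lemma neq_0_of_im_pos (w : C) : 0 < Im w -> w <> 0.
Proof. intros Hw E. rewrite E in Hw. simpl in Hw. lra. Qed.

Lemma Cdiv_opp_opp (p q : C) : (- p / - q)%C = (p / q)%C.
Proof.
  destruct p as [p1 p2], q as [q1 q2]. unfold Cdiv, Cinv, Cmult, Copp. simpl.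
  replace (- q1 * (- q1 * 1) + - q2 * (- q2 * 1))
    with (q1 * (q1 * 1) + q2 * (q2 * 1)) by ring.
  f_equal; unfold Rdiv; ring.
Qed.

Lemma mobius_opp (a b c d : Z) (t : C) :
  mobius (- a) (- b) (- c) (- d) t = mobius a b c d t.
Proof.
  unfold mobius. rewrite !opp_IZR, !RtoC_opp, <- Cdiv_opp_opp.
  f_equal; ring.
Qed.

Lemma in_SL2Z_opp (a b c d : Z) :
  in_SL2Z a b c d -> in_SL2Z (- a) (- b) (- c) (- d).
Proof. unfold in_SL2Z. lia. Qed.

Lemma mobius_translation (a b : Z) (t : C) :
  in_SL2Z a b 0 1 -> mobius a b 0 1 t = (t + IZR b)%C.
Proof.
  unfold in_SL2Z, mobius. intros Hdet.
  replace a with 1%Z by lia. simpl. field.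
Qed.

Lemma mobius_bottom_row_1 (a b d : Z) (t : C) :
  in_SL2Z a b 1 d -> (t + IZR d)%C <> 0 -> mobius a b 1 d t = (IZR a - / (t + IZR d))%C.
Proof.
  unfold in_SL2Z, mobius. intros Hdet Hnz.
  replace b with (a * d - 1)%Z by lia.
  rewrite minus_IZR, mult_IZR, RtoC_minus, RtoC_mult. simpl. field. exact Hnz.
Qed.

Lemma im_mobius (a b c d : Z) (x y : R) :
  in_SL2Z a b c d ->
  Im (mobius a b c d (x, y)) = y / ((IZR c * x + IZR d) ^ 2 + (IZR c * y) ^ 2).
Proof.
  unfold in_SL2Z, mobius. intros Hdet.
  assert (Hdet' : IZR a * IZR d - IZR b * IZR c = 1).
  { rewrite <- !mult_IZR, <- minus_IZR, Hdet. reflexivity. }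
  rewrite im_div. simpl Re. simpl Im.
  unfold Rdiv. f_equal.
  - transitivity ((IZR a * IZR d - IZR b * IZR c) * y); [ring | rewrite Hdet'; ring].
  - f_equal. ring.
Qed.

Lemma quadratic_form_small (c d : Z) :
  (c * c + d * d - Z.abs (c * d) <= 2)%Z -> (Z.abs c <= 1 /\ Z.abs d <= 1)%Z.
Proof.
  rewrite Z.abs_mul, <- (Z.abs_square c), <- (Z.abs_square d).
  pose proof (Z.abs_nonneg c). pose proof (Z.abs_nonneg d).
  nia.
Qed.

Lemma mobius_normalize_bottom_row (a b c d : Z) :
  in_SL2Z a b c d -> (Z.abs c <= 1)%Z -> (Z.abs d <= 1)%Z ->
  exists a' b' c' d', in_SL2Z a' b' c' d' /\
    (forall t, mobius a' b' c' d' t = mobius a b c d t) /\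
    ((c' = 0 /\ d' = 1) \/ (c' = 1 /\ -1 <= d' <= 1))%Z.
Proof.
  intros Hdet Hc Hd.
  assert (Hd0 : c = 0%Z -> d <> 0%Z)
    by (intros -> ->; unfold in_SL2Z in Hdet; lia).
  assert (Hcases : ((c = 0 /\ d = 1) \/ (c = 1 /\ -1 <= d <= 1))%Z \/
                   ((- c = 0 /\ - d = 1) \/ (- c = 1 /\ -1 <= - d <= 1))%Z)
    by lia.
  destruct Hcases as [Hnormal | Hnormal].
  - exists a, b, c, d. auto.
  - exists (- a)%Z, (- b)%Z, (- c)%Z, (- d)%Z.
    split; [now apply in_SL2Z_opp | split; [intro; apply mobius_opp | exact Hnormal]].
Qed.

Lemma Z_eq_or_succ (m a : Z) : IZR m - 1 < IZR a < IZR m + 2 -> (a = m \/ a = m + 1)%Z.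
Proof.
  intros [Hlo Hhi].
  assert (m - 1 < a)%Z by (apply lt_IZR; rewrite minus_IZR; exact Hlo).
  assert (a < m + 2)%Z by (apply lt_IZR; rewrite plus_IZR; exact Hhi).
  lia.
Qed.

Lemma re_minus (p q : C) : Re (p - q)%C = Re p - Re q.
Proof. unfold Cminus. rewrite re_plus, re_opp. reflexivity. Qed.

Section UnitArc.

Variables x y : R.
Hypothesis unit_circle : x ^ 2 + y ^ 2 = 1.
Hypothesis x_range : -1/2 <= x <= 0.
Hypothesis y_pos : 0 < y.

Local Notation z := ((x, y) : C).

Lemma Cinv_unit_circle : (/ z)%C = (x, - y).
Proof.
  unfold Cinv. simpl. replace (x * (x * 1) + y * (y * 1)) with 1
    by (rewrite <- unit_circle at 1; ring).
  f_equal; field.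
Qed.

Lemma re_inv_shift_unit_circle (d : R) : d ^ 2 = 1 -> Re (/ (z + d))%C = / (2 * d).
Proof.
  intros Hd. rewrite re_inv. simpl.
  assert (Hxd : x + d <> 0) by nra.
  assert (Hden : (x + d) * ((x + d) * 1) + (y + 0) * ((y + 0) * 1) = 2 * d * (x + d)).
  { transitivity (x ^ 2 + y ^ 2 + 2 * d * x + d ^ 2); [ring |].
    rewrite unit_circle, <- Hd at 1. ring. }
  rewrite Hden. field. split; [nra | exact Hxd].
Qed.

Lemma norm_shift_lower_bound (c d : Z) :
  IZR (c * c + d * d - Z.abs (c * d)) <= (IZR c * x + IZR d) ^ 2 + (IZR c * y) ^ 2.
Proof.
  replace ((IZR c * x + IZR d) ^ 2 + (IZR c * y) ^ 2)
    with (IZR c * IZR c + 2 * (IZR c * IZR d) * x + IZR d * IZR d)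
    by (transitivity (IZR c ^ 2 * (x ^ 2 + y ^ 2) + 2 * IZR c * IZR d * x + IZR d ^ 2);
        [rewrite unit_circle | ]; ring).
  rewrite minus_IZR, plus_IZR, !mult_IZR.
  destruct (Z_le_gt_dec 0 (c * d)) as [Hcd | Hcd].
  - rewrite Z.abs_eq, mult_IZR by exact Hcd.
    assert (0 <= IZR c * IZR d) by (rewrite <- mult_IZR; now apply IZR_le). nra.
  - rewrite Z.abs_neq, opp_IZR, mult_IZR by lia.
    assert (IZR c * IZR d <= 0) by (rewrite <- mult_IZR; apply IZR_le; lia). nra.
Qed.

Lemma bottom_row_bounded (a b c d : Z) :
  in_SL2Z a b c d -> in_D (mobius a b c d z) -> (Z.abs c <= 1 /\ Z.abs d <= 1)%Z.
Proof.
  intros Hdet [_ [_ HIm]].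
  rewrite (im_mobius _ _ _ _ _ _ Hdet) in HIm.
  pose proof (norm_shift_lower_bound c d) as Hlow.
  set (N := (IZR c * x + IZR d) ^ 2 + (IZR c * y) ^ 2) in *.
  assert (HN : 0 < N).
  { destruct (Req_dec N 0) as [E | E].
    - rewrite E, Rdiv_0_r in HIm. lra.
    - assert (0 <= N) by (apply Rplus_le_le_0_compat; apply pow2_ge_0). lra. }
  assert (HN5 : N < 5 / 2).
  { assert (Hy : y / N * N = y) by (field; lra).
    assert (y <= 1) by nra. nra. }
  apply quadratic_form_small, Zlt_succ_le, lt_IZR. simpl. lra.
Qed.

Lemma translation_case (a b : Z) :
  in_SL2Z a b 0 1 -> in_D (mobius a b 0 1 z) -> six_points z (mobius a b 0 1 z).
Proof.
  intros Hdet [_ [Hre _]].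
  rewrite (mobius_translation _ _ _ Hdet) in *.
  rewrite re_plus, re_RtoC, Rabs_le_between in Hre. simpl in Hre.
  destruct (Z_eq_or_succ 0 b) as [-> | ->]; [simpl; lra | |]; simpl IZR in *.
  - left. apply Cplus_0_r.
  - right; left. unfold Cdiv. rewrite Cinv_unit_circle.
    apply injective_projections; simpl; lra.
Qed.

Lemma inversion_case (a b : Z) :
  in_SL2Z a b 1 0 -> in_D (mobius a b 1 0 z) -> six_points z (mobius a b 1 0 z).
Proof.
  intros Hdet [_ [Hre _]].
  assert (Hnz : (z + IZR 0)%C <> 0) by (apply neq_0_of_im_pos; simpl; lra).
  rewrite (mobius_bottom_row_1 _ _ _ _ Hdet Hnz) in *.
  simpl IZR in *. rewrite Cplus_0_r, Cinv_unit_circle in *.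
  rewrite re_minus, re_RtoC, Rabs_le_between in Hre. simpl in Hre.
  destruct (Z_eq_or_succ (-1) a) as [-> | ->]; [simpl; lra | |]; simpl IZR in *.
  - left. apply injective_projections; simpl; lra.
  - right; left. unfold Cdiv. rewrite Cinv_unit_circle.
    apply injective_projections; simpl; lra.
Qed.

Lemma shifted_inversion_case (a b d : Z) :
  in_SL2Z a b 1 d -> (d = 1 \/ d = -1)%Z -> in_D (mobius a b 1 d z) ->
  six_points z (mobius a b 1 d z).
Proof.
  intros Hdet Hd [_ [Hre _]].
  assert (Hd2 : IZR d ^ 2 = 1) by (destruct Hd as [-> | ->]; simpl; ring).
  assert (Hnz : (z + IZR d)%C <> 0) by (apply neq_0_of_im_pos; simpl; lra).
  rewrite (mobius_bottom_row_1 _ _ _ _ Hdet Hnz) in *.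
  rewrite re_minus, re_RtoC, (re_inv_shift_unit_circle _ Hd2), Rabs_le_between in Hre.
  destruct Hd as [-> | ->]; simpl IZR in *.
  - destruct (Z_eq_or_succ 0 a) as [-> | ->]; [simpl; lra | |]; simpl IZR in *.
    + right; right; left. field; apply neq_0_of_im_pos; simpl; lra.
    + right; right; right; left. field; apply neq_0_of_im_pos; simpl; lra.
  - destruct (Z_eq_or_succ (-1) a) as [-> | ->]; [simpl; lra | |]; simpl IZR in *.
    + right; right; right; right; right. field; apply neq_0_of_im_pos; simpl; lra.
    + right; right; right; right; left. field; apply neq_0_of_im_pos; simpl; lra.
Qed.

End UnitArc.

Lemma expi_on_arc (theta : R) :
  PI / 2 <= theta <= 2 * PI / 3 ->
  cos theta ^ 2 + sin theta ^ 2 = 1 /\ -1/2 <= cos theta <= 0 /\ 0 < sin theta.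
Proof.
  intros Hth. pose proof PI_RGT_0.
  assert (Hcos_2PI3 : cos (2 * PI / 3) = -1/2).
  { replace (2 * PI / 3) with (2 * (PI / 3)) by field. apply cos_2PI3. }
  split; [| split; [split |]].
  - pose proof (sin2_cos2 theta) as E. unfold Rsqr in E. lra.
  - destruct (Req_dec theta (2 * PI / 3)) as [-> | Hne]; [lra |].
    rewrite <- Hcos_2PI3. left. apply cos_decreasing_1; lra.
  - apply cos_le_0; lra.
  - apply sin_gt_0; lra.
Qed.

Theorem lemma3p8 (theta : R) (tau : C) :
  PI / 2 <= theta <= 2 * PI / 3 ->
  in_D tau ->
  (exists a b c d : Z, in_SL2Z a b c d /\ tau = mobius a b c d (expi theta)) ->
  let z := expi theta in
  tau = z \/
  tau = Cdiv (RtoC (-1)) z \/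
  tau = Cdiv (RtoC (-1)) (Cplus z (RtoC 1)) \/
  tau = Cdiv z (Cplus z (RtoC 1)) \/
  tau = Cdiv (RtoC (-1)) (Cminus z (RtoC 1)) \/
  tau = Cdiv (Copp z) (Cminus z (RtoC 1)).
Proof.
  intros Hth HD [a [b [c [d [Hdet ->]]]]].
  change (six_points (cos theta, sin theta) (mobius a b c d (cos theta, sin theta))).
  unfold expi in HD.
  destruct (expi_on_arc theta Hth) as (Hunit & Hx & Hy).
  destruct (bottom_row_bounded _ _ Hunit Hx Hy a b c d Hdet HD) as [Hc Hd].
  destruct (mobius_normalize_bottom_row a b c d Hdet Hc Hd)
    as (a' & b' & c' & d' & Hdet' & Hsame & Hbottom).
  rewrite <- Hsame in *.
  destruct Hbottom as [[-> ->] | [-> Hd']].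
  - apply translation_case; assumption.
  - assert (d' = 0 \/ d' = 1 \/ d' = -1)%Z as [-> | Hd1] by lia.
    + apply inversion_case; assumption.
    + apply shifted_inversion_case; assumption.
Qed.
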